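(* Let $m\ge1$, $\delta\in(0,\tfrac12)$, $\epsilon\in(0,1)$, and let $r(m,\epsilon):=\max\{r\in\{0,\dots,m\}: f^{avg}_{m,r}<1-\epsilon\}$ (with $r(m,\epsilon):=-1$ if this set is empty, and $\binom{m}{\le -1}:=0$). Then \[\frac{\binom{m}{\le r(m,\epsilon)}}{2^m}\ge 1-\frac{h(\delta)}{1-\epsilon}.\]
   Context: $h(\delta)=-\delta\log_2\delta-(1-\delta)\log_2(1-\delta)$ and $\binom{m}{\le r}=\sum_{i=0}^r\binom{m}{i}$. Every function $\mathbb{F}_2^m\to\mathbb{F}_2$ is uniquely a multilinear polynomial $\sum_{S\subseteq[m]}c_Sx_S$, $x_S=\prod_{i\in S}x_i$. Let $Z=(Z_x)_{x\in\mathbb{F}_2^m}$ have i.i.d. Bernoulli$(\delta)$ entries and let $W=(W_S)_{S\subseteq[m]}$ be the coefficient vector of the multilinear polynomial whose evaluation table is $Z$. Write $W_r=(W_S)_{|S|=r}$, $W_{>r}=(W_S)_{|S|>r}$. Define $f_{m,r}:=H(W_r\mid W_{>r})$ (base-2 Shannon conditional entropy) and $f^{avg}_{m,r}:=f_{m,r}/\binom{m}{r}$. *)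

From HB Require Import structures.
From mathcomp Require Import all_boot all_order all_algebra.
From mathcomp Require Import reals exp.
Set Implicit Arguments. Unset Strict Implicit. Unset Printing Implicit Defensive.
Import Order.TTheory GRing.Theory Num.Theory.
Local Open Scope ring_scope.

Section Defs.
Variable R : realType.

Definition log2 (x : R) : R := ln x / ln 2.

Definition hbin (d : R) : R := - d * log2 d - (1 - d) * log2 (1 - d).

Definition pt (m : nat) := {ffun 'I_m -> bool}.
Definition table (m : nat) := {ffun pt m -> bool}.
(* coefficient vectors of multilinear polynomials, indexed by S ⊆ [m] *)
Definition coefs (m : nat) := {ffun {set 'I_m} -> bool}.

Definition monom m (S : {set 'I_m}) (x : pt m) : bool := [forall i in S, x i].

Definition evalp m (c : coefs m) : table m :=
  [ffun x => \big[addb/false]_(S : {set 'I_m}) (c S && monom S x)].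

(* coefficient vector of the (unique) multilinear polynomial with table z *)
Definition coef_of m (z : table m) : coefs m :=
  odflt [ffun _ => false] [pick c : coefs m | evalp c == z].

(* i.i.d. Bernoulli(d) law of Z *)
Definition probZ m (d : R) (z : table m) : R :=
  \prod_(x : pt m) (if z x then d else 1 - d).

Definition condH (Om A B : finType) (p : Om -> R) (X : Om -> A) (Y : Om -> B) : R :=
  \sum_(a : A) \sum_(b : B)
    let pab := \sum_(w : Om | (X w == a) && (Y w == b)) p w in
    let pb := \sum_(w : Om | Y w == b) p w in
    if pab == 0 then 0 else - (pab * log2 (pab / pb)).

(* W_r (entries with |S| = r; other entries masked to false) *)
Definition W_eq m (r : nat) (z : table m) : coefs m :=
  [ffun S : {set 'I_m} => (#|S| == r) && coef_of z S].
Definition W_gt m (r : nat) (z : table m) : coefs m :=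
  [ffun S : {set 'I_m} => (r < #|S|)%N && coef_of z S].

Definition f_mr (m r : nat) (d : R) : R :=
  condH (@probZ m d) (@W_eq m r) (@W_gt m r).

Definition favg (m r : nat) (d : R) : R := f_mr m r d / ('C(m, r))%:R.

Definition r_me (m : nat) (d eps : R) : int :=
  if [exists r : 'I_m.+1, favg m r d < 1 - eps]
  then Posz (\max_(r : 'I_m.+1 | favg m r d < 1 - eps) (r : nat))
  else (-1)%R.

End Defs.

Definition binom_le (m : nat) (r : int) : nat :=
  \sum_(i < m.+1 | (Posz i <= r)%R) 'C(m, i).

From HB Require Import structures.
From mathcomp Require Import all_boot all_order all_algebra.
From mathcomp Require Import reals exp.
From mathcomp Require Import ring lra.
Import Order.TTheory GRing.Theory Num.Theory.
Local Open Scope ring_scope.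
Set Implicit Arguments. Unset Strict Implicit.

(** Let [W_{>=r}] be the coefficients of degree at least [r]. As [(W_r, W_{>r})]
    and [W_{>=r}] determine each other, the chain rule gives
    [f_{m,r} = H(W_{>=r}) - H(W_{>=r+1})]; these telescope to [H(W_{>=0})],
    which is at most [H(Z) = 2^m h(delta)] because [W] is a function of [Z].
    Every degree [r > r(m,eps)] contributes [f_{m,r} >= (1 - eps) C(m,r)], so
    [(1 - eps) (2^m - C(m, <= r(m,eps))) <= 2^m h(delta)]. *)

Lemma log2_div (R : realType) (x y : R) :
  0 < x -> 0 < y -> log2 (x / y) = log2 x - log2 y.
Proof. by move=> x0 y0; rewrite /log2 ln_div ?posrE // mulrBl. Qed.

Lemma log2_prod (R : realType) (I : finType) (F : I -> R) :
  (forall i, 0 < F i) -> log2 (\prod_i F i) = \sum_i log2 (F i).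
Proof.
move=> F_gt0.
suff [] : 0 < \prod_i F i /\ log2 (\prod_i F i) = \sum_i log2 (F i) by [].
apply: (big_ind2 (fun s l => 0 < s /\ log2 s = l)) => //.
- by rewrite ltr01 /log2 ln1 mul0r.
- move=> s1 l1 s2 l2 [s1_gt0 <-] [s2_gt0 <-]; split; first exact: mulr_gt0.
  by rewrite /log2 lnM ?posrE // mulrDl.
Qed.

Section Entropy.
Variables (R : realType) (Om : finType) (p : Om -> R).
Hypothesis p_gt0 : forall w, 0 < p w.

Definition fiber_mass (T : eqType) (K : Om -> T) (w : Om) : R :=
  \sum_(w' | K w' == K w) p w'.

Definition entropy (T : eqType) (K : Om -> T) : R :=
  \sum_w p w * - log2 (fiber_mass K w).

Lemma fiber_mass_gt0 (T : eqType) (K : Om -> T) w : 0 < fiber_mass K w.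
Proof.
rewrite /fiber_mass (bigD1 w) //= ltr_wpDr ?p_gt0 //.
by apply: sumr_ge0 => w' _; apply/ltW.
Qed.

Lemma condHE (A B : finType) (X : Om -> A) (Y : Om -> B) :
  condH p X Y =
  \sum_w p w * - log2 (fiber_mass (fun w => (X w, Y w)) w / fiber_mass Y w).
Proof.
rewrite /condH pair_big [RHS](partition_big (fun w => (X w, Y w)) xpredT) //=.
apply: eq_bigr => -[a b] _ /=.
set pab := \sum_(w | _) p w; set L := log2 _.
(* The [pab == 0] branch is a special case of the general one. *)
have -> : (if pab == 0 then 0 else - (pab * L)) = - (pab * L).
  by case: eqP => [->|//]; rewrite mul0r oppr0.
rewrite mulr_suml -sumrN; apply: eq_big => // w /andP [/eqP Xw /eqP Yw].
by rewrite /L /pab /fiber_mass Xw Yw mulrN.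
Qed.

Lemma condH_entropy (A B : finType) (X : Om -> A) (Y : Om -> B) :
  condH p X Y = entropy (fun w => (X w, Y w)) - entropy Y.
Proof.
rewrite condHE /entropy -sumrB; apply: eq_bigr => w _.
by rewrite log2_div ?fiber_mass_gt0 //; ring.
Qed.

Lemma condH_ge0 (A B : finType) (X : Om -> A) (Y : Om -> B) : 0 <= condH p X Y.
Proof.
rewrite condHE; apply: sumr_ge0 => w _; rewrite mulr_ge0 ?(ltW (p_gt0 w)) //.
rewrite oppr_ge0 /log2 pmulr_lle0 ?invr_gt0 ?ln_gt0 ?ltr1n //.
rewrite ln_le0 // ler_pdivrMr ?fiber_mass_gt0 // mul1r /fiber_mass.
rewrite [leRHS](bigID (fun w' => X w' == X w)) /=.
rewrite [leLHS](eq_bigl (fun w' => (Y w' == Y w) && (X w' == X w))); last first.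
  by move=> w'; rewrite andbC.
by rewrite lerDl; apply: sumr_ge0 => w' _; apply/ltW.
Qed.

Lemma eq_entropy (T1 T2 : eqType) (K1 : Om -> T1) (K2 : Om -> T2) :
  (forall w w', (K1 w' == K1 w) = (K2 w' == K2 w)) -> entropy K1 = entropy K2.
Proof.
move=> eqK; apply: eq_bigr => w _; rewrite /fiber_mass.
by under eq_bigl do rewrite eqK.
Qed.

Lemma entropy_comp_le (A B : finType) (X : Om -> A) (f : A -> B) :
  entropy (f \o X) <= entropy X.
Proof.
have := condH_ge0 X (f \o X); rewrite condH_entropy subr_ge0.
suff -> : entropy (fun w => (X w, (f \o X) w)) = entropy X by [].
apply: eq_entropy => w w' /=.
by rewrite xpair_eqE; case: eqP => [->|]; rewrite ?eqxx.
Qed.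

Lemma entropy_const (T : eqType) (K : Om -> T) :
  \sum_w p w = 1 -> (forall w w', K w' = K w) -> entropy K = 0.
Proof.
move=> p_sum1 K_const; apply: big1 => w _; rewrite /fiber_mass.
rewrite (eq_bigl xpredT) ?p_sum1; last by move=> w'; rewrite (K_const w) eqxx.
by rewrite /log2 ln1 mul0r oppr0 mulr0.
Qed.

End Entropy.

Section BernoulliProduct.
Variables (R : realType) (I : finType) (d : R).
Hypotheses (d_gt0 : 0 < d) (d_lt1 : d < 1).

Definition bern (b : bool) : R := if b then d else 1 - d.

Definition bern_prod (z : {ffun I -> bool}) : R := \prod_i bern (z i).

Lemma bern_gt0 b : 0 < bern b.
Proof. by case: b => /=; rewrite ?subr_gt0. Qed.

Lemma bern_prod_gt0 z : 0 < bern_prod z.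
Proof. by apply: prodr_gt0 => i _; apply: bern_gt0. Qed.

Lemma bern_prod_sum1 : \sum_z bern_prod z = 1.
Proof.
rewrite -(bigA_distr_bigA (fun _ => bern)) /= big1 // => i _.
by rewrite big_bool /=; ring.
Qed.

Lemma bern_prod_marginal (x : I) (g : bool -> R) :
  \sum_z bern_prod z * g (z x) = \sum_b bern b * g b.
Proof.
pose F i b := if i == x then bern b * g b else bern b.
transitivity (\sum_(z : {ffun I -> bool}) \prod_i F i (z i)).
  apply: eq_bigr => z _; rewrite /bern_prod (bigD1 x) //= [RHS](bigD1 x) //=.
  rewrite /F eqxx mulrAC; congr (_ * _).
  by apply: eq_bigr => i /negbTE ->.
rewrite -(bigA_distr_bigA F) /= (bigD1 x) //= [X in _ * X]big1 => [|i /negbTE Fi].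
  by rewrite mulr1 /F eqxx.
by rewrite /F Fi big_bool /=; ring.
Qed.

Lemma entropy_bern_prod : entropy bern_prod id = #|I|%:R * hbin d.
Proof.
have entropy_pointE z : bern_prod z * - log2 (fiber_mass bern_prod id z) =
    \sum_i bern_prod z * - log2 (bern (z i)).
  rewrite /fiber_mass big_pred1_eq {2}/bern_prod log2_prod => [|i]; last exact: bern_gt0.
  by rewrite -sumrN mulr_sumr.
rewrite /entropy (eq_bigr _ (fun z _ => entropy_pointE z)) exchange_big /=.
under eq_bigr do rewrite (bern_prod_marginal _ (fun b => - log2 (bern b))).
by rewrite sumr_const big_bool /= -mulr_natl /hbin; ring.
Qed.

End BernoulliProduct.

Section CoefficientLayers.
Variables (R : realType) (m : nat) (d : R).
Hypotheses (d_gt0 : 0 < d) (d_lt1 : d < 1).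

Definition W_ge (r : nat) (z : table m) : coefs m :=
  [ffun S : {set 'I_m} => (r <= #|S|)%N && coef_of z S].

Let probZ_gt0 (z : table m) : 0 < probZ d z.
Proof. exact: bern_prod_gt0. Qed.

Lemma f_mr_ge0 r : 0 <= f_mr m r d.
Proof. exact: condH_ge0. Qed.

Lemma f_mr_entropy r :
  f_mr m r d = entropy (probZ d) (W_ge r) - entropy (probZ d) (W_ge r.+1).
Proof.
rewrite /f_mr condH_entropy //; congr (_ - _).
apply: eq_entropy => z z'.
apply/eqP/eqP => [[/ffunP eqW_eq /ffunP eqW_gt] | /ffunP eqW_ge].
  apply/ffunP => S; move: (eqW_eq S) (eqW_gt S); rewrite !ffunE.
  by case: ltngtP => //= _ _ ->.
by congr (_, _); apply/ffunP => S; move: (eqW_ge S); rewrite !ffunE;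
  case: ltngtP => //= _ ->.
Qed.

Lemma sum_f_mr_le : \sum_(r < m.+1) f_mr m r d <= 2 ^+ m * hbin d.
Proof.
pose H r := entropy (probZ d) (W_ge r).
rewrite -(big_mkord xpredT (fun r => f_mr m r d)).
rewrite (telescope_sumr_eq (fun r => - H r)) => [|//|r _]; last first.
  by rewrite f_mr_entropy opprK addrC.
have top_layer_empty : H m.+1 = 0.
  apply: entropy_const => [|z z']; first exact: bern_prod_sum1.
  apply/ffunP => S; rewrite !ffunE.
  by have := max_card (pred_of_set S); rewrite card_ord ltnNge => ->.
rewrite top_layer_empty oppr0 sub0r opprK.
have -> : 2 ^+ m * hbin d = entropy (@probZ R m d) id.
  by rewrite (entropy_bern_prod (pt m) d_gt0 d_lt1) card_ffun card_bool card_ord natrX.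
exact: (entropy_comp_le probZ_gt0 id (W_ge 0)).
Qed.

End CoefficientLayers.

Lemma favg_ge_above_r_me (R : realType) (m : nat) (d eps : R) (r : 'I_m.+1) :
  ~~ (Posz r <= r_me m d eps)%R -> 1 - eps <= favg m r d.
Proof.
rewrite /r_me (leNgt (1 - eps)); case: ifP => [_ | /negbT /existsPn /(_ r) -> //].
by rewrite lez_nat; apply: contraNN => favg_lt; apply: leq_bigmax_cond.
Qed.

Lemma sum_binomial m : (\sum_(i < m.+1) 'C(m, i))%N = (2 ^ m)%N.
Proof.
rewrite -[in RHS]addn1 expnDn; apply: eq_bigr => i _.
by rewrite !exp1n !muln1.
Qed.

Lemma binom_tail_le_sum_f_mr (R : realType) (m : nat) (d eps : R) :
  0 < d -> d < 1 ->
  (1 - eps) * (2 ^+ m - (binom_le m (r_me m d eps))%:R)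
    <= \sum_(r < m.+1) f_mr m r d.
Proof.
move=> d_gt0 d_lt1; set low := fun i : 'I_m.+1 => (Posz i <= r_me m d eps)%R.
have -> : 2 ^+ m - (binom_le m (r_me m d eps))%:R =
    \sum_(i < m.+1 | ~~ low i) ('C(m, i))%:R :> R.
  rewrite -natrX -sum_binomial (bigID low) /= natrD /binom_le addrAC subrr add0r.
  by rewrite natr_sum.
rewrite mulr_sumr [leRHS](bigID low) /= -[leLHS]add0r lerD //.
  by apply: sumr_ge0 => i _; apply: f_mr_ge0.
apply: ler_sum => i /favg_ge_above_r_me.
by rewrite /favg ler_pdivlMr // ltr0n bin_gt0 -ltnS.
Qed.

Unset Implicit Arguments.
Theorem claim7p1 (R : realType) (m : nat) (d eps : R) :
  (1 <= m)%N -> 0 < d -> d < 1 / 2 -> 0 < eps -> eps < 1 ->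
  (binom_le m (r_me m d eps))%:R / 2 ^+ m >= 1 - hbin d / (1 - eps).
Proof.
move=> _ d_gt0 d_lt_half _ eps_lt1.
have d_lt1 : d < 1 by lra.
have := le_trans (binom_tail_le_sum_f_mr m eps d_gt0 d_lt1) (sum_f_mr_le m d_gt0 d_lt1).
set N := (2 : R) ^+ m; set b := (binom_le _ _)%:R; set t := hbin d / (1 - eps).
have N_gt0 : 0 < N by apply: exprn_gt0.
have -> : hbin d = t * (1 - eps) by rewrite /t mulfVK // subr_eq0 gt_eqF.
rewrite mulrA [leLHS]mulrC ler_pM2r ?subr_gt0 // => tail_le.
by rewrite ler_pdivlMr //; nra.
Qed.
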